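(* Let $n\ge 3$ and let $v_1,\dots,v_n:2^{[n]}\to\mathbb{R}$ be functions such that for every $i$: $v_i(S)\ge 0$; $v_i(S)=0$ if $i\notin S$; $v_i(S)\le v_i(R)$ whenever $S\subseteq R$; and $v_i(S\cup R)\le v_i(S)+v_i(R)$ for all $S,R\subseteq[n]$ with $i\in S\cap R$. Let $(p^*,S)$ be an optimal solution of $\mathcal{F}^{(3)}$, i.e. $S\subseteq[n]$, $|S|\ge 3$, $p^*\ge 0$, $v_i(S)\ge p^*$ for all $i\in S$, and $p^*|S|$ equals $\max\{c|S'| : c\ge 0, S'\subseteq[n], |S'|\ge 3, v_i(S')\ge c\ \forall i\in S'\}$. Let $A,B,C$ be a partition of $[n]$ (parts may be empty). For $X\in\{A,B\}$ define $r_X(C)=\max\{c\cdot|T| : c\ge 0,\ T\subseteq C,\ v_i(T\cup X)\ge c\text{ for all } i\in T\}$, let $r(C)=\max\{r_A(C),r_B(C)\}$ and $r_{\mathcal{F}}(C)=|S\cap C|\cdot p^*$. Then $r(C)\ge r_{\mathcal{F}}(C)/4$. *)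

From mathcomp Require Import all_boot all_order all_algebra.
Set Implicit Arguments. Unset Strict Implicit. Unset Printing Implicit Defensive.
Import Order.TTheory GRing.Theory Num.Theory.
Local Open Scope ring_scope.

Definition is_maxval (R : realFieldType) (E : R -> Prop) (m : R) : Prop :=
  E m /\ forall x, E x -> x <= m.

Definition valid_vals (R : realFieldType) (n : nat)
  (v : 'I_n -> {set 'I_n} -> R) : Prop :=
  forall i : 'I_n,
    (forall S : {set 'I_n}, 0 <= v i S) /\
    (forall S : {set 'I_n}, i \notin S -> v i S = 0) /\
    (forall S T : {set 'I_n}, S \subset T -> v i S <= v i T) /\
    (forall S T : {set 'I_n}, i \in S :&: T -> v i (S :|: T) <= v i S + v i T).

Definition F3val (R : realFieldType) (n : nat) (v : 'I_n -> {set 'I_n} -> R)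
  (x : R) : Prop :=
  exists (c : R) (S' : {set 'I_n}),
    [/\ 0 <= c, (3 <= #|S'|)%N, (forall i, i \in S' -> c <= v i S') &
        x = c * (#|S'|%:R)].

Definition rXval (R : realFieldType) (n : nat) (v : 'I_n -> {set 'I_n} -> R)
  (X C : {set 'I_n}) (x : R) : Prop :=
  exists (c : R) (T : {set 'I_n}),
    [/\ 0 <= c, T \subset C, (forall i, i \in T -> c <= v i (T :|: X)) &
        x = c * (#|T|%:R)].

From mathcomp Require Import all_boot all_order all_algebra.
From mathcomp Require Import lra.

Set Implicit Arguments.
Unset Strict Implicit.
Unset Printing Implicit Defensive.
Import Order.TTheory GRing.Theory Num.Theory.
Local Open Scope ring_scope.

(* Let T := S ∩ C and take a maximal P ⊆ T whose members all value P ∪ A at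
   least p*/2.  Each i ∈ T \ P values S at least p*, and S is covered by
   (P + i) ∪ A and (T \ P) ∪ B, two sets both containing i; by subadditivity
   one of them is worth p*/2 to i, and by maximality of P it is not the first.
   So P witnesses r_A(C) ≥ |P| p*/2 and T \ P witnesses r_B(C) ≥ |T \ P| p*/2,
   whence max(r_A, r_B) ≥ |T| p*/4.  Only the feasibility of (p*, S) and the
   covering A ∪ B ∪ C = [n] are needed, not optimality or disjointness. *)

Section StableSplit.

Variables (R : realFieldType) (n : nat) (v : 'I_n -> {set 'I_n} -> R).
Hypothesis hv : valid_vals v.

Definition stable_with (q : R) (X P : {set 'I_n}) : bool :=
  [forall i in P, q <= v i (P :|: X)].

Lemma v_subadd_cover (i : 'I_n) (W Y Z : {set 'I_n}) :
  i \in Y :&: Z -> W \subset Y :|: Z -> v i W <= v i Y + v i Z.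
Proof.
have [_ [_ [vmono vsub]]] := hv i.
by move=> iYZ WYZ; exact: le_trans (vmono _ _ WYZ) (vsub _ _ iYZ).
Qed.

Lemma stable_setU1 (q : R) (X P : {set 'I_n}) (i : 'I_n) :
  stable_with q X P -> q <= v i (i |: P :|: X) -> stable_with q X (i |: P).
Proof.
move=> /forall_inP stP qi; apply/forall_inP => j /setU1P [-> //| jP].
have [_ [_ [vmono _]]] := hv j.
apply: le_trans (stP j jP) (vmono _ _ _).
by rewrite setSU // subsetUr.
Qed.

Lemma rXval_stable (q : R) (X C P : {set 'I_n}) :
  0 <= q -> P \subset C -> stable_with q X P -> rXval v X C (q * #|P|%:R).
Proof. by move=> q0 PC /forall_inP stP; exists q, P; split. Qed.

Lemma stable_split (p : R) (S A B T : {set 'I_n}) :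
  (forall i, i \in T -> p <= v i S) -> S \subset A :|: B :|: T ->
  exists2 P : {set 'I_n}, P \subset T &
    stable_with (p / 2) A P && stable_with (p / 2) B (T :\: P).
Proof.
move=> HT SABT.
pose good (P : {set 'I_n}) := (P \subset T) && stable_with (p / 2) A P.
have good0 : good set0.
  by rewrite /good sub0set; apply/forall_inP => i; rewrite inE.
have [P maxP _] := maxset_exists good0.
have /andP [PT stP] := maxsetp maxP.
exists P => //; rewrite stP; apply/forall_inP => i /setDP [iT iP].
have cover : S \subset (i |: P :|: A) :|: (T :\: P :|: B).
  apply/subsetP => x /(subsetP SABT); rewrite !inE.
  by case: (x \in P); rewrite ?orbT ?andbT //= -!orbA => /or3P [-> | -> | ->];
     rewrite ?orbT.
have i_both : i \in (i |: P :|: A) :&: (T :\: P :|: B).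
  by rewrite !inE eqxx iT iP.
have split_p := le_trans (HT i iT) (v_subadd_cover i_both cover).
rewrite leNgt; apply/negP => small_B.
have goodPi : good (i |: P).
  rewrite /good subUset sub1set iT PT; apply: stable_setU1 => //; lra.
have := maxsetsup maxP goodPi (subsetUr _ _).
by move/setP/(_ i); rewrite setU11 (negbTE iP).
Qed.

End StableSplit.

Theorem lemma2 (R : realFieldType) (n : nat) (v : 'I_n -> {set 'I_n} -> R)
  (pstar : R) (S A B C : {set 'I_n}) (rA rB : R) :
  (3 <= n)%N ->
  valid_vals v ->
  (3 <= #|S|)%N -> 0 <= pstar -> (forall i, i \in S -> pstar <= v i S) ->
  is_maxval (F3val v) (pstar * #|S|%:R) ->
  [disjoint A & B] -> [disjoint A & C] -> [disjoint B & C] ->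
  A :|: B :|: C = [set: 'I_n] ->
  is_maxval (rXval v A C) rA ->
  is_maxval (rXval v B C) rB ->
  Num.max rA rB >= (#|S :&: C|%:R * pstar) / 4.
Proof.
move=> _ hv _ p0 HS _ _ _ _ hU [_ maxA] [_ maxB].
set T := S :&: C.
have SABT : S \subset A :|: B :|: T.
  apply/subsetP => x xS; have : x \in A :|: B :|: C by rewrite hU inE.
  by rewrite !inE xS.
have HT i : i \in T -> pstar <= v i S by rewrite inE => /andP [/HS].
have [P PT /andP [stA stB]] := stable_split hv HT SABT.
have TC : T \subset C by apply: subsetIr.
have q0 : 0 <= pstar / 2 by lra.
have hA := maxA _ (rXval_stable q0 (subset_trans PT TC) stA).
have hB := maxB _ (rXval_stable q0 (subset_trans (subsetDl T P) TC) stB).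
have cardT : #|T|%:R = #|P|%:R + #|T :\: P|%:R :> R.
  by rewrite -natrD -(cardsID P T) (setIidPr PT).
have maxrA : rA <= Num.max rA rB by rewrite le_max lexx.
have maxrB : rB <= Num.max rA rB by rewrite le_max lexx orbT.
rewrite cardT; lra.
Qed.
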